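(* Let $\alpha$ be a snowy weak composition and $i$ an index with $\alpha_i>\alpha_{i+1}$. Then $\mathsf{rajcode}(s_i\alpha)=s_i\,\mathsf{rajcode}(\alpha)+e_i$, where $s_i$ swaps the $i$-th and $(i+1)$-th entries and $e_i$ is the weak composition with $1$ in entry $i$ and $0$ elsewhere.
   Context: A weak composition is an infinite sequence of nonnegative integers with finitely many positive entries; it is snowy if its positive entries are distinct. $D(\alpha)=\{(r,c):1\le c\le\alpha_r\}$ (row 1 on top). For a diagram $D$, $\mathsf{snow}(D)$ is built by iterating through rows from bottom to top: in row $r$ take the rightmost cell $(r,c)\in D$ such that column $c$ contains no dark cloud yet; if it exists label it a dark cloud and add snowflake cells at $(r',c)$ for all $r'<r$ with $(r',c)\notin D$. $\mathsf{rajcode}(\alpha)_r$ is the number of cells of $\mathsf{snow}(D(\alpha))$ in row $r$. *)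

From mathcomp Require Import all_boot.
Set Implicit Arguments. Unset Strict Implicit. Unset Printing Implicit Defensive.

(* A weak composition (alpha_1, alpha_2, ...) with finitely many positive
   entries is represented by the finite list [alpha_1; ...; alpha_n];
   all entries beyond the list are 0.  Rows are indexed from 1. *)
Definition comp_at (a : seq nat) (r : nat) : nat :=
  if r is r'.+1 then nth 0 a r' else 0.

Definition snowy (a : seq nat) : bool := uniq [seq x <- a | 0 < x].

Definition tswap (i r : nat) : nat :=
  if r == i then i.+1 else if r == i.+1 then i else r.

Definition si (i : nat) (a : seq nat) : seq nat :=
  mkseq (fun k => comp_at a (tswap i k.+1)) (maxn (size a) i.+1).

(* the diagram D(alpha) = {(r,c) : 1 <= c <= alpha_r} (row 1 on top) *)
Definition in_D (a : seq nat) (r c : nat) : bool := (1 <= c) && (c <= comp_at a r).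

(* processing row r, given the dark clouds cl already placed (in lower rows):
   the rightmost cell (r,c) of D whose column c holds no dark cloud yet
   becomes a dark cloud. *)
Definition row_cand (a : seq nat) (cl : seq (nat * nat)) (r : nat) : seq nat :=
  [seq c <- iota 1 (comp_at a r) | c \notin map snd cl].

Definition dark_step (a : seq nat) (cl : seq (nat * nat)) (r : nat) :=
  match row_cand a cl r with
  | [::] => cl
  | c0 :: s => (r, last c0 s) :: cl
  end.

(* all dark clouds, iterating through rows from bottom (row size a) to top (row 1);
   rows below size a are empty and create no dark cloud *)
Definition dark_clouds (a : seq nat) : seq (nat * nat) :=
  foldl (dark_step a) [::] (rev (iota 1 (size a))).

Definition is_snowflake (a : seq nat) (r c : nat) : bool :=
  (1 <= r) && ~~ in_D a r c && has (fun p => (r < p.1) && (p.2 == c)) (dark_clouds a).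

Definition in_snow (a : seq nat) (r c : nat) : bool := in_D a r c || is_snowflake a r c.

(* all columns of snow(D(alpha)) are <= max alpha *)
Definition col_bound (a : seq nat) : nat := foldr maxn 0 a.

Definition rajcode (a : seq nat) (r : nat) : nat :=
  count (in_snow a r) (iota 1 (col_bound a)).

From mathcomp Require Import all_boot zify.
Set Implicit Arguments. Unset Strict Implicit. Unset Printing Implicit Defensive.

(* For a snowy composition the dark cloud of every nonempty row r sits at
   (r, alpha_r), because no lower row has its cloud in column alpha_r.  Hence
   row r of snow(D(alpha)) consists of the columns 1..alpha_r together with
   the columns alpha_r' > alpha_r for r' > r.  Swapping rows i and i+1 does not
   change the set of rows below r when r <> i, so those rows are just permuted
   (for row i+1 the column alpha_(i+1) < alpha_i is irrelevant); row i of
   s_i alpha additionally sees the column alpha_i, which is the extra cell e_i. *)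

Lemma uniq_filter_nth_inj (T : eqType) (p : pred T) (x0 : T) (s : seq T) i j :
  uniq (filter p s) -> i < size s -> j < size s ->
  p (nth x0 s i) -> nth x0 s i = nth x0 s j -> i = j.
Proof.
elim: s i j => [|x s IHs] [|i] [|j] //=; rewrite ?ltnS.
- move=> + _ j_lt px xE; rewrite px /= => /andP[+ _].
  by rewrite mem_filter px xE mem_nth.
- move=> + i_lt _ px xE; rewrite -xE px /= => /andP[+ _].
  by rewrite mem_filter px mem_nth.
- move=> uniq_ps i_lt j_lt px xE; congr _.+1; apply: IHs => //.
  by case: (p x) uniq_ps => /= [/andP[]|].
Qed.

Lemma comp_at_gt0_row (a : seq nat) r : 0 < comp_at a r -> 0 < r <= size a.
Proof.
case: r => //= r; rewrite ltnNge; apply: contraNT; rewrite -ltnNge => size_le.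
by rewrite nth_default.
Qed.

Lemma snowy_comp_inj a :
  snowy a -> {in [pred r | 0 < comp_at a r] &, injective (comp_at a)}.
Proof.
move=> snowy_a r r'; rewrite !inE => /[dup] /comp_at_gt0_row r_row ar_gt0.
move=> /[dup] /comp_at_gt0_row r'_row _.
case: r r' r_row r'_row ar_gt0 => [|r] [|r'] //= r_lt r'_lt ar_gt0 arE.
by congr _.+1; apply: (uniq_filter_nth_inj snowy_a r_lt r'_lt ar_gt0 arE).
Qed.

Lemma tswapK i : involutive (tswap i).
Proof. by move=> r; rewrite /tswap; do !case: eqP; lia. Qed.

Lemma tswap_l i : tswap i i = i.+1.
Proof. by rewrite /tswap eqxx. Qed.

Lemma tswap_r i : tswap i i.+1 = i.
Proof. by rewrite /tswap eqxx; case: eqP; lia. Qed.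

Lemma tswap_id i r : r != i -> r != i.+1 -> tswap i r = r.
Proof. by rewrite /tswap => /negbTE-> /negbTE->. Qed.

Lemma ltn_tswap_neq i r r' : r != i -> (r < tswap i r') = (r < r').
Proof. by rewrite /tswap; do !case: eqP; lia. Qed.

Lemma ltn_tswap_self i r : (i < tswap i r) = (r == i) || (i.+1 < r).
Proof. by rewrite /tswap; do !case: eqP; lia. Qed.

Lemma comp_at_si a i r : 0 < i -> comp_at (si i a) r = comp_at a (tswap i r).
Proof.
move=> i_gt0; case: r => [|r] /=; first by rewrite tswap_id //; lia.
rewrite /si; case: (ltnP r (maxn (size a) i.+1)) => r_lt; first by rewrite nth_mkseq.
rewrite nth_default ?size_mkseq // tswap_id /= ?nth_default //; lia.
Qed.

Lemma si_comp_inj a i : 0 < i ->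
  {in [pred r | 0 < comp_at a r] &, injective (comp_at a)} ->
  {in [pred r | 0 < comp_at (si i a) r] &, injective (comp_at (si i a))}.
Proof.
move=> i_gt0 a_inj r r'; rewrite !inE !comp_at_si // => ar_gt0 _ arE.
by rewrite -(tswapK i r) (a_inj _ _ ar_gt0 _ arE) ?tswapK // inE -arE.
Qed.

Lemma comp_at_le_col_bound a r : comp_at a r <= col_bound a.
Proof.
case: r => //= r; elim: a r => [|x a IHa] [|r] //=; first exact: leq_maxl.
by rewrite leq_max IHa orbT.
Qed.

Lemma col_bound_le a m : (forall r, comp_at a r <= m) -> col_bound a <= m.
Proof.
elim: a => [|x a IHa] //= a_le; rewrite geq_max (a_le 1) /=.
by apply: IHa => -[|r] //; apply: (a_le r.+2).
Qed.

Lemma col_bound_si a i : 0 < i -> col_bound (si i a) = col_bound a.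
Proof.
move=> i_gt0; apply/eqP; rewrite eqn_leq; apply/andP; split; apply: col_bound_le => r.
  by rewrite comp_at_si // comp_at_le_col_bound.
by rewrite -(tswapK i r) -comp_at_si // comp_at_le_col_bound.
Qed.

Definition occurs_below (a : seq nat) (r c : nat) : Prop :=
  exists2 r', r < r' & comp_at a r' = c.

Lemma dark_step_fresh a cl r : comp_at a r \notin map snd cl ->
  dark_step a cl r = if 0 < comp_at a r then (r, comp_at a r) :: cl else cl.
Proof.
rewrite /dark_step /row_cand; case: (comp_at a r) => [|n] // fresh.
rewrite -[X in iota _ X]addn1 iotaD cats1 filter_rcons add1n fresh.
by case: [seq _ <- _ | _] => [|c s] //=; rewrite last_rcons.
Qed.

Section SnowyDiagram.

Variable a : seq nat.
Hypothesis a_inj : {in [pred r | 0 < comp_at a r] &, injective (comp_at a)}.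

Lemma dark_step_rows m k :
  foldr (fun r cl => dark_step a cl r) [::] (iota m k) =
  [seq (r, comp_at a r) | r <- iota m k & 0 < comp_at a r].
Proof.
elim: k m => [|k IHk] m //=; rewrite IHk dark_step_fresh; first by case: ifP.
rewrite -map_comp; apply/mapP => -[r]; rewrite mem_filter mem_iota => /andP[ar_gt0 r_in].
move=> /= mE; suff: m = r by lia.
by apply: (a_inj _ _ mE); rewrite inE ?mE.
Qed.

Lemma dark_cloudsE :
  dark_clouds a = [seq (r, comp_at a r) | r <- iota 1 (size a) & 0 < comp_at a r].
Proof. by rewrite /dark_clouds foldl_rev dark_step_rows. Qed.

Lemma dark_cloud_belowP r c :
  reflect (0 < c /\ occurs_below a r c)
          (has (fun p => (r < p.1) && (p.2 == c)) (dark_clouds a)).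
Proof.
rewrite dark_cloudsE; apply: (iffP hasP).
  move=> [_ /mapP[r' + ->]] /andP[r_lt /eqP arE].
  by rewrite mem_filter => /andP[ar_gt0 _]; split; [rewrite -arE | exists r'].
move=> [c_gt0 [r' r_lt arE]]; exists (r', c); last by rewrite /= r_lt eqxx.
apply/mapP; exists r'; last by rewrite arE.
rewrite mem_filter arE c_gt0 mem_iota.
by have := @comp_at_gt0_row a r'; rewrite arE c_gt0 => /(_ isT); lia.
Qed.

Lemma in_snowP r c :
  reflect (0 < c <= comp_at a r \/ [/\ 0 < r, comp_at a r < c & occurs_below a r c])
          (in_snow a r c).
Proof.
rewrite /in_snow /is_snowflake /in_D.
have [ar_lt|_] := ltnP (comp_at a r) c.
  rewrite andbF /= andbT; apply: (iffP andP) => [[r_gt0 /dark_cloud_belowP[_ occ]]|].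
    by right; split.
  by case=> // -[r_gt0 _ occ]; split=> //; apply/dark_cloud_belowP; split=> //; lia.
rewrite !andbT; have [c0|_] := posnP c; last by constructor; left.
rewrite c0 /=; apply: (iffP andP) => [[_ /dark_cloud_belowP[]]|] //.
by case=> // -[].
Qed.

End SnowyDiagram.

Lemma occurs_below_si a i r c : 0 < i ->
  occurs_below (si i a) r c <-> exists2 r', r < tswap i r' & comp_at a r' = c.
Proof.
move=> i_gt0; split=> -[r' r_lt arE]; exists (tswap i r');
  by rewrite ?comp_at_si ?tswapK in arE *.
Qed.

Lemma occurs_below_si_neq a i r c : 0 < i -> r != i ->
  occurs_below (si i a) r c <-> occurs_below a r c.
Proof.
move=> i_gt0 r_neq; rewrite occurs_below_si //.
by split=> -[r' r_lt arE]; exists r'; rewrite ?ltn_tswap_neq in r_lt *.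
Qed.

Lemma occurs_below_si_self a i c : 0 < i ->
  occurs_below (si i a) i c <-> occurs_below a i.+1 c \/ c = comp_at a i.
Proof.
move=> i_gt0; rewrite occurs_below_si //; split.
  move=> [r' + <-]; rewrite ltn_tswap_self => /predU1P[->|lt_r']; first by right.
  by left; exists r'.
case=> [[r' lt_r' <-]|->]; first by exists r'; rewrite // ltn_tswap_self lt_r' orbT.
by exists i; rewrite // tswap_l.
Qed.

Lemma occurs_below_succ a r c : comp_at a r.+1 < c ->
  occurs_below a r c <-> occurs_below a r.+1 c.
Proof.
move=> succ_lt; split=> -[r' r_lt arE]; exists r' => //; last exact: ltnW.
by move: r_lt; rewrite leq_eqVlt => /predU1P[r'E|//]; move: succ_lt; rewrite r'E arE ltnn.
Qed.

Lemma eq_in_snow_row a b r s :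
  {in [pred r | 0 < comp_at a r] &, injective (comp_at a)} ->
  {in [pred r | 0 < comp_at b r] &, injective (comp_at b)} ->
  (0 < r) = (0 < s) -> comp_at a r = comp_at b s ->
  (forall c, comp_at b s < c -> occurs_below a r c <-> occurs_below b s c) ->
  in_snow a r =1 in_snow b s.
Proof.
move=> a_inj b_inj rsE arE occE c.
apply/(in_snowP a_inj)/(in_snowP b_inj); rewrite rsE arE.
  by move=> -[c_le|[s_gt0 lt_c /(occE c lt_c) occ]]; [left | right; split].
by move=> -[c_le|[s_gt0 lt_c /(occE c lt_c) occ]]; [left | right; split].
Qed.

Lemma count_predU1 (T : eqType) (P : pred T) x s : uniq s -> ~~ P x ->
  count (fun y => P y || (y == x)) s = count P s + (x \in s).
Proof.
move=> s_uniq Px; rewrite -(count_uniq_mem x s_uniq) -count_predUI.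
rewrite [X in _ + X](@eq_count _ _ pred0) ?count_pred0 ?addn0 // => y /=.
by case: eqP => [->|]; rewrite ?(negbTE Px) ?andbF.
Qed.

Section SwapDescent.

Variables (a : seq nat) (i : nat).
Hypothesis i_gt0 : 0 < i.
Hypothesis a_inj : {in [pred r | 0 < comp_at a r] &, injective (comp_at a)}.
Hypothesis descent : comp_at a i.+1 < comp_at a i.

Let si_inj := si_comp_inj i_gt0 a_inj.

Lemma in_snow_si_neq r : r != i -> r != i.+1 -> in_snow (si i a) r =1 in_snow a r.
Proof.
move=> r_neq r_neq1; apply: eq_in_snow_row => //; first by rewrite comp_at_si ?tswap_id.
by move=> c _; apply: occurs_below_si_neq.
Qed.

Lemma in_snow_si_succ : in_snow (si i a) i.+1 =1 in_snow a i.
Proof.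
apply: eq_in_snow_row => //; first by rewrite comp_at_si ?tswap_r.
move=> c lt_c; rewrite occurs_below_si_neq ?gtn_eqF //.
by symmetry; apply: occurs_below_succ; lia.
Qed.

Lemma in_snow_si_self c : in_snow (si i a) i c = in_snow a i.+1 c || (c == comp_at a i).
Proof.
apply/(in_snowP si_inj)/orP; rewrite comp_at_si // tswap_l.
  move=> [c_le|[_ lt_c /occurs_below_si_self[//|occ|->]]]; last by right.
    by left; apply/(in_snowP a_inj); left.
  by left; apply/(in_snowP a_inj); right.
move=> [/(in_snowP a_inj)[c_le|[_ lt_c occ]]|/eqP->]; first by left.
  by right; split=> //; apply/occurs_below_si_self => //; left.
by right; split=> //; apply/occurs_below_si_self => //; right.
Qed.

Lemma notin_snow_succ : ~~ in_snow a i.+1 (comp_at a i).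
Proof.
apply/(in_snowP a_inj) => -[|[_ _ [r' lt_r' arE]]]; first lia.
suff: r' = i by lia.
by apply: (a_inj _ _ arE); rewrite inE ?arE; lia.
Qed.

End SwapDescent.

Theorem corollary4p19 (a : seq nat) (i : nat) :
  0 < i -> snowy a -> comp_at a i.+1 < comp_at a i ->
  forall r : nat, rajcode (si i a) r = rajcode a (tswap i r) + (r == i).
Proof.
move=> i_gt0 snowy_a descent r; have a_inj := snowy_comp_inj snowy_a.
rewrite /rajcode col_bound_si //.
have [->|r_neq] := eqVneq r i.
  have ai_in : comp_at a i \in iota 1 (col_bound a).
    by rewrite mem_iota; have := comp_at_le_col_bound a i; lia.
  rewrite tswap_l (eq_count (in_snow_si_self i_gt0 a_inj descent)).
  by rewrite count_predU1 ?iota_uniq ?notin_snow_succ ?ai_in.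
rewrite addn0; have [->|r_neq1] := eqVneq r i.+1.
  by rewrite tswap_r; apply: eq_count; apply: in_snow_si_succ.
by rewrite tswap_id //; apply: eq_count; apply: in_snow_si_neq.
Qed.
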